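(* Let $\widetilde\lambda:\widetilde C\to\widetilde C'$ be a morphism of $\mathcal S$-complexes over $R$, with irreducible component $\lambda:(C,d)\to(C',d')$ and reducible component $\rho:(\mathsf R,r)\to(\mathsf R',r')$. Suppose $\lambda$ is chain homotopic to an isomorphism of chain complexes and $\rho$ is chain homotopic to an isomorphism of chain complexes. Then $\widetilde\lambda$ is $\mathcal S$-chain homotopic to an isomorphism of $\mathcal S$-complexes.
   Context: Let $R$ be a commutative ring. Graded modules are $\mathbb Z$-graded; for a graded module $V$, $V[i]$ denotes the graded module with $V[i]_j=V_{i+j}$; differentials have degree $-1$. An $\mathcal S$-complex over $R$ is a chain complex $(\widetilde C,\widetilde d)$ of finitely generated free graded $R$-modules with a graded decomposition $\widetilde C=C\oplus C[-1]\oplus\mathsf R$ with respect to which $\widetilde d=\begin{pmatrix} d&0&0\\ v&-d&\delta_2\\ \delta_1&0&r\end{pmatrix}$. The chain complexes $(C,d)$ and $(\mathsf R,r)$ are the irreducible and reducible complexes. A morphism $\widetilde\lambda:\widetilde C\to\widetilde C'$ of $\mathcal S$-complexes is a degree $0$ chain map of the form $\begin{pmatrix}\lambda&0&0\\ \mu&\lambda&\Delta_2\\ \Delta_1&0&\rho\end{pmatrix}$; $\lambda$ is its irreducible component and $\rho$ its reducible component (these are chain maps $(C,d)\to(C',d')$ and $(\mathsf R,r)\to(\mathsf R',r')$). An $\mathcal S$-chain homotopy between morphisms $\widetilde\lambda,\widetilde\lambda'$ is a degree $1$ map $\widetilde K$ of the form $\begin{pmatrix}K&0&0\\ L&-K&M_2\\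 M_1&0&J\end{pmatrix}$ with $\widetilde d'\widetilde K+\widetilde K\widetilde d=\widetilde\lambda-\widetilde\lambda'$. An isomorphism of $\mathcal S$-complexes is a morphism which is bijective and whose inverse is a morphism. *)

From HB Require Import structures.
From mathcomp Require Import all_boot all_order all_algebra.
Set Implicit Arguments. Unset Strict Implicit. Unset Printing Implicit Defensive.
Import GRing.Theory.
Local Open Scope ring_scope.

(* A finitely generated free graded R-module is represented by a finite
   homogeneous basis: a dimension n and the degree (deg i : int) of each basis
   vector i : 'I_n.  A graded map V -> W is a matrix 'M_(dim W, dim V)
   (rows = target basis, columns = source basis); it has degree k when every
   nonzero entry sends a basis vector of degree e to one of degree e + k. *)
Definition homog (R : pzRingType) m n (degT : 'I_m -> int) (degS : 'I_n -> int)
  (k : int) (f : 'M[R]_(m, n)) : Prop :=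
  forall i j, f i j != 0 -> degT i = degS j + k.

(* degrees of the basis of C (+) C[-1] (+) RR; C[-1]_j = C_(j-1), so a basis
   vector of C of degree e has degree e + 1 in C[-1]. *)
Definition sdeg nC nR (degC : 'I_nC -> int) (degR : 'I_nR -> int)
  (i : 'I_(nC + (nC + nR))) : int :=
  match split i with
  | inl a => degC a
  | inr b => match split b with
             | inl c => degC c + 1
             | inr e => degR e
             end
  end.

Definition blk3 (R : pzRingType) m1 m2 m3 n1 n2 n3
  (a : 'M[R]_(m1, n1)) (b : 'M[R]_(m1, n2)) (c : 'M[R]_(m1, n3))
  (d : 'M[R]_(m2, n1)) (e : 'M[R]_(m2, n2)) (f : 'M[R]_(m2, n3))
  (g : 'M[R]_(m3, n1)) (h : 'M[R]_(m3, n2)) (i : 'M[R]_(m3, n3))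
  : 'M[R]_(m1 + (m2 + m3), n1 + (n2 + n3)) :=
  col_mx (row_mx a (row_mx b c))
         (col_mx (row_mx d (row_mx e f)) (row_mx g (row_mx h i))).

Definition Sdiff (R : pzRingType) nC nR (d v : 'M[R]_nC) (d1 : 'M[R]_(nR, nC))
  (d2 : 'M[R]_(nC, nR)) (r : 'M[R]_nR) :=
  blk3 d 0 0 v (- d) d2 d1 0 r.

Record Scomplex (R : comPzRingType) := {
  nC : nat;
  nR : nat;
  degC : 'I_nC -> int;
  degR : 'I_nR -> int;
  sc_d : 'M[R]_nC;
  sc_v : 'M[R]_nC;
  sc_delta1 : 'M[R]_(nR, nC);
  sc_delta2 : 'M[R]_(nC, nR);
  sc_r : 'M[R]_nR;
  sc_homog : homog (sdeg degC degR) (sdeg degC degR) (-1)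
               (Sdiff sc_d sc_v sc_delta1 sc_delta2 sc_r);
  sc_sq : Sdiff sc_d sc_v sc_delta1 sc_delta2 sc_r *m
          Sdiff sc_d sc_v sc_delta1 sc_delta2 sc_r = 0
}.

Arguments degC {R} s _.
Arguments degR {R} s _.

Definition Stot_deg (R : comPzRingType) (X : Scomplex R) :=
  sdeg (degC X) (degR X).
Arguments Stot_deg {R} X _.
Definition Stot_d (R : comPzRingType) (X : Scomplex R) :=
  Sdiff (sc_d X) (sc_v X) (sc_delta1 X) (sc_delta2 X) (sc_r X).

Definition Smap (R : pzRingType) mC mR nC nR
  (lam : 'M[R]_(mC, nC)) (mu : 'M[R]_(mC, nC)) (D1 : 'M[R]_(mR, nC))
  (D2 : 'M[R]_(mC, nR)) (rho : 'M[R]_(mR, nR)) :=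
  blk3 lam 0 0 mu lam D2 D1 0 rho.

Record Smorphism (R : comPzRingType) (X Y : Scomplex R) := {
  sm_lam : 'M[R]_(nC Y, nC X);
  sm_mu : 'M[R]_(nC Y, nC X);
  sm_Delta1 : 'M[R]_(nR Y, nC X);
  sm_Delta2 : 'M[R]_(nC Y, nR X);
  sm_rho : 'M[R]_(nR Y, nR X);
  sm_homog : homog (Stot_deg Y) (Stot_deg X) 0
               (Smap sm_lam sm_mu sm_Delta1 sm_Delta2 sm_rho);
  sm_chain : Stot_d Y *m Smap sm_lam sm_mu sm_Delta1 sm_Delta2 sm_rho =
             Smap sm_lam sm_mu sm_Delta1 sm_Delta2 sm_rho *m Stot_d X
}.

Definition Smor_tot (R : comPzRingType) (X Y : Scomplex R) (F : Smorphism X Y) :=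
  Smap (sm_lam F) (sm_mu F) (sm_Delta1 F) (sm_Delta2 F) (sm_rho F).

Definition S_iso (R : comPzRingType) (X Y : Scomplex R) (F : Smorphism X Y) : Prop :=
  exists G : Smorphism Y X,
    Smor_tot G *m Smor_tot F = 1%:M /\ Smor_tot F *m Smor_tot G = 1%:M.

Definition S_homotopic (R : comPzRingType) (X Y : Scomplex R)
  (F G : Smorphism X Y) : Prop :=
  exists (K L : 'M[R]_(nC Y, nC X)) (M1 : 'M[R]_(nR Y, nC X))
         (M2 : 'M[R]_(nC Y, nR X)) (J : 'M[R]_(nR Y, nR X)),
    let KK := blk3 K 0 0 L (- K) M2 M1 0 J in
    homog (Stot_deg Y) (Stot_deg X) 1 KK /\
    Stot_d Y *m KK + KK *m Stot_d X = Smor_tot F - Smor_tot G.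

Definition chain_map (R : pzRingType) m n (degS : 'I_n -> int) (degT : 'I_m -> int)
  (dS : 'M[R]_n) (dT : 'M[R]_m) (f : 'M[R]_(m, n)) : Prop :=
  homog degT degS 0 f /\ dT *m f = f *m dS.

Definition chain_homotopic (R : pzRingType) m n (degS : 'I_n -> int)
  (degT : 'I_m -> int) (dS : 'M[R]_n) (dT : 'M[R]_m) (f g : 'M[R]_(m, n)) : Prop :=
  exists K : 'M[R]_(m, n),
    homog degT degS 1 K /\ dT *m K + K *m dS = f - g.

Definition chain_iso (R : pzRingType) m n (degS : 'I_n -> int) (degT : 'I_m -> int)
  (dS : 'M[R]_n) (dT : 'M[R]_m) (f : 'M[R]_(m, n)) : Prop :=
  chain_map degS degT dS dT f /\
  exists h : 'M[R]_(n, m),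
    chain_map degT degS dT dS h /\ h *m f = 1%:M /\ f *m h = 1%:M.

(* Subtract from F the boundary of the diagonal S-homotopy diag(K, -K, J)
   built from chain homotopies K : lambda ~ g and J : rho ~ h.  The result G
   is again an S-morphism, S-homotopic to F, and its diagonal blocks are
   g, g, h.  Since G is block lower triangular with invertible diagonal, it is
   invertible, and the inverse of a degree 0 chain map is a degree 0 chain
   map, so G is an isomorphism of S-complexes. *)
From HB Require Import structures.
From mathcomp Require Import all_boot all_order all_algebra.
Set Implicit Arguments. Unset Strict Implicit. Unset Printing Implicit Defensive.
Import GRing.Theory.
Local Open Scope ring_scope.

Section Homogeneous.
Variable R : pzRingType.
Implicit Types (m n p : nat) (k : int).

Lemma homog0 m n (dm : 'I_m -> int) (dn : 'I_n -> int) k :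
  homog dm dn k (0 : 'M[R]_(m, n)).
Proof. by move=> i j; rewrite mxE eqxx. Qed.

Lemma homogD m n (dm : 'I_m -> int) (dn : 'I_n -> int) k (A B : 'M[R]_(m, n)) :
  homog dm dn k A -> homog dm dn k B -> homog dm dn k (A + B).
Proof.
move=> hA hB i j; rewrite mxE; have [Aij0 | /hA //] := eqVneq (A i j) 0.
by rewrite Aij0 add0r => /hB.
Qed.

Lemma homogN m n (dm : 'I_m -> int) (dn : 'I_n -> int) k (A : 'M[R]_(m, n)) :
  homog dm dn k A -> homog dm dn k (- A).
Proof. by move=> hA i j; rewrite mxE oppr_eq0 => /hA. Qed.

Lemma homogM m n p (dm : 'I_m -> int) (dn : 'I_n -> int) (dp : 'I_p -> int)
    k1 k2 (A : 'M[R]_(m, n)) (B : 'M[R]_(n, p)) :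
  homog dm dn k1 A -> homog dn dp k2 B -> homog dm dp (k1 + k2) (A *m B).
Proof.
move=> hA hB i j; rewrite mxE; apply: contraNeq => deg_ij.
apply/eqP/big1 => l _; have [->|/hA Ail] := eqVneq (A i l) 0; first exact: mul0r.
have [->|/hB Blj] := eqVneq (B l j) 0; first exact: mulr0.
by move: deg_ij; rewrite Ail Blj -addrA [k2 + _]addrC eqxx.
Qed.

Lemma homog_shift1 m n (dm : 'I_m -> int) (dn : 'I_n -> int) k (A : 'M[R]_(m, n)) :
  homog dm dn k A -> homog (fun i => dm i + 1) (fun j => dn j + 1) k A.
Proof. by move=> hA i j /hA ->; rewrite -!addrA [k + _]addrC. Qed.

(* Project the identity [B *m A = 1] onto the part of [B] of degree [e]: if
   [B] had a nonzero entry of degree [e != 0], that part [P] would satisfy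
   [A *m P = 0] because [A] preserves degrees, whence [P = B *m A *m P = 0]. *)
Lemma homog_inverse m n (dm : 'I_m -> int) (dn : 'I_n -> int)
    (A : 'M[R]_(m, n)) (B : 'M[R]_(n, m)) :
  homog dm dn 0 A -> B *m A = 1%:M -> A *m B = 1%:M -> homog dn dm 0 B.
Proof.
move=> hA BA AB i j Bij; rewrite addr0; apply/eqP; apply: contraNT Bij => deg_ij.
pose e := dn i - dm j.
pose P := \matrix_(a, b) if dn a == dm b + e then B a b else 0.
have AP : A *m P = 0.
  apply/matrixP => a b; rewrite !mxE.
  transitivity (if dm a == dm b + e then (A *m B) a b else 0).
    rewrite mxE; case: ifP => deg_ab; [apply: eq_bigr | rewrite big1 //] => l _;
      rewrite mxE; have [->|/hA Aal] := eqVneq (A a l) 0; rewrite ?mul0r //;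
      by rewrite -(addr0 (dn l)) -Aal deg_ab ?mulr0.
  rewrite AB mxE; case: ifP => // /eqP deg_ab; have [ab|] := eqVneq a b; last first.
    by rewrite mulr0n.
  have /eqP : e = 0 by apply: (@addrI _ (dm b)); rewrite addr0 -deg_ab ab.
  by rewrite subr_eq0 (negbTE deg_ij).
have : P = 0 by rewrite -[P]mul1mx -BA -mulmxA AP mulmx0.
by move/matrixP/(_ i j); rewrite !mxE /e addrC subrK eqxx => ->.
Qed.

Definition deg3 n1 n2 n3 (d1 : 'I_n1 -> int) (d2 : 'I_n2 -> int)
    (d3 : 'I_n3 -> int) (i : 'I_(n1 + (n2 + n3))) : int :=
  match split i with
  | inl a => d1 a
  | inr b => match split b with inl c => d2 c | inr e => d3 e end
  end.

Lemma homog_blk3 m1 m2 m3 n1 n2 n3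
    (t1 : 'I_m1 -> int) (t2 : 'I_m2 -> int) (t3 : 'I_m3 -> int)
    (s1 : 'I_n1 -> int) (s2 : 'I_n2 -> int) (s3 : 'I_n3 -> int) k
    (a : 'M[R]_(m1, n1)) (b : 'M[R]_(m1, n2)) (c : 'M[R]_(m1, n3))
    (d : 'M[R]_(m2, n1)) (e : 'M[R]_(m2, n2)) (f : 'M[R]_(m2, n3))
    (g : 'M[R]_(m3, n1)) (h : 'M[R]_(m3, n2)) (i : 'M[R]_(m3, n3)) :
  homog t1 s1 k a -> homog t1 s2 k b -> homog t1 s3 k c ->
  homog t2 s1 k d -> homog t2 s2 k e -> homog t2 s3 k f ->
  homog t3 s1 k g -> homog t3 s2 k h -> homog t3 s3 k i ->
  homog (deg3 t1 t2 t3) (deg3 s1 s2 s3) k (blk3 a b c d e f g h i).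
Proof.
move=> ha hb hc hd he hf hg hh hi x y; rewrite /blk3 /deg3 !mxE.
case: (split x) => [x1|x2]; rewrite ?mxE; last case: (split x2) => [x3|x4];
by rewrite ?mxE; case: (split y) => [y1|y2]; rewrite ?mxE;
  try case: (split y2) => [y3|y4]; rewrite ?mxE; auto.
Qed.

End Homogeneous.

Section BlockAlgebra.
Variable R : pzRingType.

Lemma mulmx_blk3 m1 m2 m3 n1 n2 n3 p1 p2 p3
    (a : 'M[R]_(m1, n1)) (b : 'M[R]_(m1, n2)) (c : 'M[R]_(m1, n3))
    (d : 'M[R]_(m2, n1)) (e : 'M[R]_(m2, n2)) (f : 'M[R]_(m2, n3))
    (g : 'M[R]_(m3, n1)) (h : 'M[R]_(m3, n2)) (i : 'M[R]_(m3, n3))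
    (a' : 'M[R]_(n1, p1)) (b' : 'M[R]_(n1, p2)) (c' : 'M[R]_(n1, p3))
    (d' : 'M[R]_(n2, p1)) (e' : 'M[R]_(n2, p2)) (f' : 'M[R]_(n2, p3))
    (g' : 'M[R]_(n3, p1)) (h' : 'M[R]_(n3, p2)) (i' : 'M[R]_(n3, p3)) :
  blk3 a b c d e f g h i *m blk3 a' b' c' d' e' f' g' h' i' =
  blk3 (a *m a' + (b *m d' + c *m g')) (a *m b' + (b *m e' + c *m h'))
       (a *m c' + (b *m f' + c *m i'))
       (d *m a' + (e *m d' + f *m g')) (d *m b' + (e *m e' + f *m h'))
       (d *m c' + (e *m f' + f *m i'))
       (g *m a' + (h *m d' + i *m g')) (g *m b' + (h *m e' + i *m h'))
       (g *m c' + (h *m f' + i *m i')).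
Proof. by rewrite /blk3 !mul_col_mx !mul_row_col !mul_mx_row !add_row_mx. Qed.

Lemma add_blk3 m1 m2 m3 n1 n2 n3
    (a a' : 'M[R]_(m1, n1)) (b b' : 'M[R]_(m1, n2)) (c c' : 'M[R]_(m1, n3))
    (d d' : 'M[R]_(m2, n1)) (e e' : 'M[R]_(m2, n2)) (f f' : 'M[R]_(m2, n3))
    (g g' : 'M[R]_(m3, n1)) (h h' : 'M[R]_(m3, n2)) (i i' : 'M[R]_(m3, n3)) :
  blk3 a b c d e f g h i + blk3 a' b' c' d' e' f' g' h' i' =
  blk3 (a + a') (b + b') (c + c') (d + d') (e + e') (f + f')
       (g + g') (h + h') (i + i').
Proof. by rewrite /blk3 !add_col_mx !add_row_mx. Qed.

Lemma opp_blk3 m1 m2 m3 n1 n2 n3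
    (a : 'M[R]_(m1, n1)) (b : 'M[R]_(m1, n2)) (c : 'M[R]_(m1, n3))
    (d : 'M[R]_(m2, n1)) (e : 'M[R]_(m2, n2)) (f : 'M[R]_(m2, n3))
    (g : 'M[R]_(m3, n1)) (h : 'M[R]_(m3, n2)) (i : 'M[R]_(m3, n3)) :
  - blk3 a b c d e f g h i = blk3 (- a) (- b) (- c) (- d) (- e) (- f) (- g) (- h) (- i).
Proof. by rewrite /blk3 !opp_col_mx !opp_row_mx. Qed.

Lemma scalar_mx_blk3 n1 n2 n3 :
  (1%:M : 'M[R]_(n1 + (n2 + n3))) = blk3 1%:M 0 0 0 1%:M 0 0 0 1%:M.
Proof.
rewrite /blk3 scalar_mx_block (scalar_mx_block n2 n3) /block_mx.
rewrite -[0 : 'M_(n1, n2 + n3)]row_mx0 -[0 : 'M_(n2 + n3, n1)]col_mx0.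
by rewrite -(block_mxEv 0 _ 0 _) block_mxEh.
Qed.

Lemma SmapB mC mR nC nR (lam lam' mu mu' : 'M[R]_(mC, nC))
    (D1 D1' : 'M[R]_(mR, nC)) (D2 D2' : 'M[R]_(mC, nR)) (rho rho' : 'M[R]_(mR, nR)) :
  Smap (lam - lam') (mu - mu') (D1 - D1') (D2 - D2') (rho - rho') =
  Smap lam mu D1 D2 rho - Smap lam' mu' D1' D2' rho'.
Proof. by rewrite /Smap opp_blk3 add_blk3 !oppr0 !addr0. Qed.

Lemma Sdiff_homotopy_Smap mC mR nC nR (dY vY : 'M[R]_mC) (d1Y : 'M[R]_(mR, mC))
    (d2Y : 'M[R]_(mC, mR)) (rY : 'M[R]_mR) (dX vX : 'M[R]_nC)
    (d1X : 'M[R]_(nR, nC)) (d2X : 'M[R]_(nC, nR)) (rX : 'M[R]_nR)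
    (K L : 'M[R]_(mC, nC)) (M1 : 'M[R]_(mR, nC)) (M2 : 'M[R]_(mC, nR))
    (J : 'M[R]_(mR, nR)) :
  let H := blk3 K 0 0 L (- K) M2 M1 0 J in
  exists mu D1 D2,
    Sdiff dY vY d1Y d2Y rY *m H + H *m Sdiff dX vX d1X d2X rX =
    Smap (dY *m K + K *m dX) mu D1 D2 (rY *m J + J *m rX).
Proof.
rewrite /Sdiff /Smap !mulmx_blk3 add_blk3 !(mul0mx, mulmx0, add0r, addr0).
by rewrite !(mulNmx, mulmxN, opprK); do 3 eexists.
Qed.

Lemma Smap_inverse mC mR nC nR (g : 'M[R]_(mC, nC)) (gi : 'M[R]_(nC, mC))
    (h : 'M[R]_(mR, nR)) (hi : 'M[R]_(nR, mR)) (mu : 'M[R]_(mC, nC))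
    (D1 : 'M[R]_(mR, nC)) (D2 : 'M[R]_(mC, nR)) :
  gi *m g = 1%:M -> g *m gi = 1%:M -> hi *m h = 1%:M -> h *m hi = 1%:M ->
  exists mu' D1' D2',
    Smap gi mu' D1' D2' hi *m Smap g mu D1 D2 h = 1%:M /\
    Smap g mu D1 D2 h *m Smap gi mu' D1' D2' hi = 1%:M.
Proof.
move=> gig ggi hih hhi.
pose D2' := - (gi *m D2 *m hi); pose D1' := - (hi *m D1 *m gi).
exists (- ((gi *m mu + D2' *m D1) *m gi)), D1', D2'.
rewrite /Smap !mulmx_blk3 !scalar_mx_blk3 !(mul0mx, mulmx0, add0r, addr0) /D1' /D2'.
rewrite !(mulNmx, mulmxN, mulmxDr, mulmxDl, opprD, opprK).
rewrite !mulmxA ?gig ?ggi ?hih ?hhi ?mul1mx -!mulmxA ?gig ?ggi ?hih ?hhi ?mulmx1.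
split; congr blk3; rewrite ?subrr ?addNr //.
  by rewrite addrACA addNr subrr addr0.
by rewrite addrK subrr.
Qed.

End BlockAlgebra.

Section ChainMaps.
Variable R : pzRingType.

Lemma homotopy_boundary_chain m n (dX : 'M[R]_n) (dY : 'M[R]_m) (H : 'M[R]_(m, n)) :
  dX *m dX = 0 -> dY *m dY = 0 ->
  dY *m (dY *m H + H *m dX) = (dY *m H + H *m dX) *m dX.
Proof.
move=> dX2 dY2; rewrite mulmxDr mulmxDl !mulmxA dY2 mul0mx add0r.
by rewrite -!mulmxA dX2 mulmx0 addr0.
Qed.

Lemma chain_inverse m n (dX : 'M[R]_n) (dY : 'M[R]_m)
    (A : 'M[R]_(m, n)) (B : 'M[R]_(n, m)) :
  B *m A = 1%:M -> A *m B = 1%:M -> dY *m A = A *m dX -> dX *m B = B *m dY.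
Proof.
move=> BA AB chA; rewrite -[dX *m B]mul1mx -BA -!mulmxA (mulmxA A) -chA.
by rewrite !mulmxA -(mulmxA _ A) AB mulmx1.
Qed.

End ChainMaps.

Section SMorphisms.
Variables (R : comPzRingType) (X Y : Scomplex R).

Lemma Smorphism_sub_boundary (F : Smorphism X Y) K L M1 M2 J :
  homog (Stot_deg Y) (Stot_deg X) 1 (blk3 K 0 0 L (- K) M2 M1 0 J) ->
  exists G : Smorphism X Y,
    [/\ sm_lam G = sm_lam F - (sc_d Y *m K + K *m sc_d X),
        sm_rho G = sm_rho F - (sc_r Y *m J + J *m sc_r X) & S_homotopic F G].
Proof.
set H := blk3 _ _ _ _ _ _ _ _ _ => hH.
pose D := Stot_d Y *m H + H *m Stot_d X.
have [mu [D1 [D2 eD]]] : exists mu D1 D2,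
    D = Smap (sc_d Y *m K + K *m sc_d X) mu D1 D2 (sc_r Y *m J + J *m sc_r X).
  exact: Sdiff_homotopy_Smap.
pose G := Smap (sm_lam F - (sc_d Y *m K + K *m sc_d X)) (sm_mu F - mu)
  (sm_Delta1 F - D1) (sm_Delta2 F - D2) (sm_rho F - (sc_r Y *m J + J *m sc_r X)).
have eG : G = Smor_tot F - D by rewrite /G SmapB eD.
have hG : homog (Stot_deg Y) (Stot_deg X) 0 G.
  have hdH := homogM (@sc_homog _ Y) hH; have hHd := homogM hH (@sc_homog _ X).
  rewrite addNr in hdH; rewrite addrN in hHd.
  by rewrite eG; apply/homogD/homogN/homogD; first exact: sm_homog.
have cG : Stot_d Y *m G = G *m Stot_d X.
  rewrite eG mulmxBr mulmxBl sm_chain homotopy_boundary_chain //; exact: sc_sq.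
exists (Build_Smorphism hG cG); split=> //.
by exists K, L, M1, M2, J; split=> //; rewrite /Smor_tot /= -/G -/(Smor_tot F) eG subKr.
Qed.

Lemma S_iso_diag_invertible (G : Smorphism X Y) gi hi :
  gi *m sm_lam G = 1%:M -> sm_lam G *m gi = 1%:M ->
  hi *m sm_rho G = 1%:M -> sm_rho G *m hi = 1%:M -> S_iso G.
Proof.
move=> gig ggi hih hhi.
have [mu' [D1' [D2' [TG GT]]]] := Smap_inverse (sm_mu G) (sm_Delta1 G) (sm_Delta2 G)
  gig ggi hih hhi.
have hT := homog_inverse (@sm_homog _ _ _ G) TG GT.
have cT := chain_inverse TG GT (@sm_chain _ _ _ G).
by exists (Build_Smorphism hT cT).
Qed.

End SMorphisms.

Theorem lemma2p3 (R : comPzRingType) (X Y : Scomplex R) (F : Smorphism X Y) :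
  (exists g : 'M[R]_(nC Y, nC X),
     chain_iso (degC X) (degC Y) (sc_d X) (sc_d Y) g /\
     chain_homotopic (degC X) (degC Y) (sc_d X) (sc_d Y) (sm_lam F) g) ->
  (exists g : 'M[R]_(nR Y, nR X),
     chain_iso (degR X) (degR Y) (sc_r X) (sc_r Y) g /\
     chain_homotopic (degR X) (degR Y) (sc_r X) (sc_r Y) (sm_rho F) g) ->
  exists G : Smorphism X Y, S_iso G /\ S_homotopic F G.
Proof.
move=> [g [[_ [gi [_ [gig ggi]]]] [K [hK eK]]]].
move=> [h [[_ [hi [_ [hih hhi]]]] [J [hJ eJ]]]].
have hH : homog (Stot_deg Y) (Stot_deg X) 1 (blk3 K 0 0 0 (- K) 0 0 0 J).
  by apply: homog_blk3 => //; try exact: homog0; apply/homogN/homog_shift1.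
have [G [lamG rhoG FG]] := Smorphism_sub_boundary F hH.
have lamGE : sm_lam G = g by rewrite lamG eK subKr.
have rhoGE : sm_rho G = h by rewrite rhoG eJ subKr.
exists G; split=> //.
by apply: (S_iso_diag_invertible (gi := gi) (hi := hi)); rewrite ?lamGE ?rhoGE.
Qed.
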